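(* Let $\mathcal{M}$ be a playable coalition model, $w\in W$, $\varphi\in\mathcal{L}_{CL}$, and $k$ a natural number. Then $\mathrm{Robustness}^w(\varphi)>k$ if and only if every coalition $C\subseteq N$ with $|C|\le k$ satisfies $\mathcal{M},w\models\mathrm{FI}_C(\varphi)$.
   Context: Let $N=\{1,\dots,n\}$ be a finite set of agents and $\mathrm{Prop}$ a countable set of atoms. The language $\mathcal{L}_{CL}$ is $\varphi ::= p \mid \neg\varphi \mid (\varphi\wedge\psi)\mid [C]\varphi$ ($p\in\mathrm{Prop}$, $C\subseteq N$). A coalition model is $\mathcal{M}=(W,E,V)$, $W$ nonempty, $E_w(C)\subseteq\mathcal{P}(W)$, $V:\mathrm{Prop}\to\mathcal{P}(W)$; $\mathcal{M},w\models[C]\varphi$ iff $\{u\mid\mathcal{M},u\models\varphi\}\in E_w(C)$, Boolean clauses classical. Playability of $E_w$: for all $C,D\subseteq N$, $X,Y\subseteq W$: $\emptyset\notin E_w(C)$; $W\in E_w(C)$; $X\in E_w(C)$, $X\subseteq Y$ imply $Y\in E_w(C)$; $C\cap D=\emptyset$, $X\in E_w(C)$, $Y\in E_w(D)$ imply $X\cap Y\in E_w(C\cup D)$; $X\notin E_w(\emptyset)$ iff $W\setminus X\in E_w(N)$; the model is playable if each $E_w$ is. $\mathrm{FI}_C(\varphi)=\neg[C]\varphi\wedge\neg[C]\neg\varphi$. Inability threshold: $\mathcal{C}^w_{\min}(\varphi)=\{C\subseteq N\mid\mathcal{M},w\not\models\mathrm{FI}_C(\varphi)\text{ and }\mathcal{M},w\models\mathrm{FI}_D(\varphi)\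 \forall D\subsetneq C\}$. $\mathrm{Robustness}^w(\varphi)=\min\{|C|: C\in\mathcal{C}^w_{\min}(\varphi)\}$ if this family is nonempty, and $\infty$ otherwise. *)

From Stdlib Require Import Classical ClassicalEpsilon.
From mathcomp Require Import all_boot.
Set Implicit Arguments. Unset Strict Implicit. Unset Printing Implicit Defensive.

(* Agents N = {1..n} represented by 'I_n; coalitions are {set 'I_n}.
   Atoms Prop are indexed by nat (countable). *)
Inductive form (n : nat) : Type :=
| Atom : nat -> form n
| Neg : form n -> form n
| And : form n -> form n -> form n
| Box : {set 'I_n} -> form n -> form n.

(* Coalition model: W nonempty, effectivity E w C : set of subsets of W
   (subsets of W are predicates W -> Prop), valuation V. *)
Record cmodel (n : nat) := CModel {
  world : Type;
  world_inhabited : inhabited world;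
  eff : world -> {set 'I_n} -> (world -> Prop) -> Prop;
  val : nat -> world -> Prop
}.

Fixpoint sat n (M : cmodel n) (w : world M) (f : form n) {struct f} : Prop :=
  match f with
  | Atom p => @val n M p w
  | Neg g => ~ sat w g
  | And g h => sat w g /\ sat w h
  | Box C g => @eff n M w C (fun u => sat u g)
  end.

Definition playable_at n (M : cmodel n) (w : world M) : Prop :=
  (forall C, ~ eff w C (fun _ => False)) /\
  (forall C, eff w C (fun _ => True)) /\
  (forall C (X Y : world M -> Prop), eff w C X ->
      (forall u, X u -> Y u) -> eff w C Y) /\
  (forall (C D : {set 'I_n}) (X Y : world M -> Prop), [disjoint C & D] ->
      eff w C X -> eff w D Y -> eff w (C :|: D) (fun u => X u /\ Y u)) /\
  (forall X : world M -> Prop, ~ eff w set0 X <-> eff w setT (fun u => ~ X u)).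

Definition playable n (M : cmodel n) : Prop := forall w : world M, playable_at w.

Definition FI n (C : {set 'I_n}) (phi : form n) : form n :=
  And (Neg (Box C phi)) (Neg (Box C (Neg phi))).

Definition pbool (P : Prop) : bool :=
  if excluded_middle_informative P then true else false.

Definition minimal_threshold n (M : cmodel n) (w : world M) (phi : form n)
  (C : {set 'I_n}) : Prop :=
  ~ sat w (FI C phi) /\ (forall D : {set 'I_n}, D \proper C -> sat w (FI D phi)).

Definition Cmin n (M : cmodel n) (w : world M) (phi : form n) : {set {set 'I_n}} :=
  [set C | pbool (minimal_threshold w phi C)].

(* Robustness in nat extended with infinity: None = infinity. *)
Definition robustness n (M : cmodel n) (w : world M) (phi : form n) : option nat :=
  if Cmin w phi == set0 then None
  else Some (\big[minn/n.+1]_(C in Cmin w phi) #|C|).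

Definition ext_gt (r : option nat) (k : nat) : Prop :=
  match r with None => True | Some m => k < m end.

(* Every coalition at which FI fails contains an inclusion-minimal such
   coalition, i.e. a member of the inability threshold, which is no larger.
   Hence FI holds at every coalition of size at most k iff every member of
   the threshold has more than k agents, which is what Robustness > k says,
   since the minimum of a nonempty family exceeds k iff all its members do. *)
From mathcomp Require Import all_boot all_order.
From Stdlib Require Import Classical ClassicalEpsilon.

Import Order.TTheory.

Lemma pboolP (P : Prop) : reflect P (pbool P).
Proof. by rewrite /pbool; case: excluded_middle_informative => ?; constructor. Qed.

Section Threshold.

Variables (n : nat) (M : cmodel n) (w : world M) (phi : form n).

Definition not_FI_at (C : {set 'I_n}) : bool := pbool (~ sat w (FI C phi)).

Lemma minset_not_FI_threshold (C : {set 'I_n}) :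
  minset not_FI_at C -> minimal_threshold w phi C.
Proof.
move=> /minsetP[/pboolP notFI_C minC]; split=> // D ltDC.
apply: NNPP => notFI_D; have /eqP := proper_neq ltDC.
by apply; apply: minC (proper_sub ltDC); apply/pboolP.
Qed.

Lemma not_FI_sub_threshold (C : {set 'I_n}) :
  ~ sat w (FI C phi) ->
  exists2 C' : {set 'I_n}, C' \subset C & minimal_threshold w phi C'.
Proof.
move=> /pboolP notFI_C; have [C' minC' subC'C] := @minset_exists _ not_FI_at C notFI_C.
by exists C'; last exact: minset_not_FI_threshold.
Qed.

Lemma robustness_gtP (k : nat) :
  ext_gt (robustness w phi) k <-> forall C, C \in Cmin w phi -> k < #|C|.
Proof.
rewrite /robustness; case: eqP => [-> | /eqP/set0Pn[C0 C0min]] /=.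
  by split=> // _ C; rewrite inE.
rewrite -minEnat; split=> [/(@bigmin_gtP _ nat)[] // | gt_k].
apply/(@bigmin_gtP _ nat); split=> //.
have le_C0n : #|C0| <= n by rewrite -[X in _ <= X]card_ord max_card.
exact: leq_trans (gt_k _ C0min) (leqW le_C0n).
Qed.

End Threshold.

Theorem mainTheorem15 (n : nat) (M : cmodel n) (w : world M) (phi : form n) (k : nat) :
  playable M ->
  (ext_gt (robustness w phi) k <->
   forall C : {set 'I_n}, #|C| <= k -> sat w (FI C phi)).
Proof.
move=> _; rewrite robustness_gtP; split=> [gt_k C le_Ck | FI_small C].
- apply: NNPP => /not_FI_sub_threshold[C' subC'C thrC'].
  have /gt_k : C' \in Cmin w phi by rewrite inE; apply/pboolP.
  by rewrite ltnNge (leq_trans (subset_leq_card subC'C) le_Ck).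
- rewrite inE => /pboolP[notFI_C _].
  by rewrite ltnNge; apply/negP => /FI_small.
Qed.
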